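(* Let $\mathcal{M}$ be the $2\times2$ gridding matrix with $\mathcal{M}_{1,1}=\mathrm{Av}(\pi)$, $\mathcal{M}_{2,1}=\mathrm{Dec}$, $\mathcal{M}_{1,2}=\mathrm{Dec}$, $\mathcal{M}_{2,2}=\mathrm{Inc}$ (i.e. bottom row $\mathrm{Av}(\pi),\mathrm{Dec}$ and top row $\mathrm{Dec},\mathrm{Inc}$). Then $\mathrm{Grid}(\mathcal{M})\subseteq\mathrm{Av}(\sigma)$ whenever $\pi=132$ and $\sigma=14523$, or $\pi=231$ and $\sigma=24513$, or $\pi=321$ and $\sigma\in\{32154,42513\}$.
   Context: $\mathrm{Av}(\pi)$ is the class of permutations avoiding $\pi$; $\mathrm{Inc}=\mathrm{Av}(21)$, $\mathrm{Dec}=\mathrm{Av}(12)$. For a matrix $\mathcal{M}$ of permutation classes with $k$ columns and $\ell$ rows ($\mathcal{M}_{i,j}$ in column $i$, row $j$, rows numbered bottom to top), $\mathrm{Grid}(\mathcal{M})$ is the set of permutations $\tau$ of length $n$ for which there are $1=c_1\le\dots\le c_{k+1}=n+1$, $1=r_1\le\dots\le r_{\ell+1}=n+1$ such that for each $i,j$ the points $(x,\tau_x)$ with $c_i\le x<c_{i+1}$, $r_j\le\tau_x<r_{j+1}$ form a pattern belonging to $\mathcal{M}_{i,j}$. *)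

From mathcomp Require Import all_boot.
Set Implicit Arguments. Unset Strict Implicit. Unset Printing Implicit Defensive.

Definition is_perm (s : seq nat) : Prop := perm_eq s (iota 1 (size s)).

Definition order_iso (a b : seq nat) : Prop :=
  size a = size b /\
  forall i j, i < size a -> j < size a ->
    (nth 0 a i < nth 0 a j) = (nth 0 b i < nth 0 b j).

Definition contains (s p : seq nat) : Prop :=
  exists m : bitseq, size m = size s /\ order_iso (mask m s) p.

Definition Av (p : seq nat) (s : seq nat) : Prop := ~ contains s p.
Definition Inc := Av [:: 2; 1].
Definition Dec := Av [:: 1; 2].

(* standardization: the permutation of 1..k order-isomorphic to s
   (for s with distinct entries) *)
Definition std (s : seq nat) : seq nat :=
  [seq (count (fun y => y < x) s).+1 | x <- s].

(* the points (x, tau_x) with c0 <= x < c1 and r0 <= tau_x < r1, read left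
   to right (positions are 1-based) *)
Definition cell (tau : seq nat) (c0 c1 r0 r1 : nat) : seq nat :=
  [seq y <- [seq nth 0 tau (x.-1) | x <- iota c0 (c1 - c0)] | r0 <= y < r1].

(* Grid(M) for a k-column, l-row matrix M (M i j : column i, row j,
   1-based, rows numbered bottom to top). *)
Definition Grid (k l : nat) (M : nat -> nat -> seq nat -> Prop)
    (tau : seq nat) : Prop :=
  is_perm tau /\
  exists c r : nat -> nat,
    [/\ c 1 = 1, c k.+1 = (size tau).+1 &
        (forall i, 1 <= i <= k -> c i <= c i.+1)] /\
    [/\ r 1 = 1, r l.+1 = (size tau).+1 &
        (forall j, 1 <= j <= l -> r j <= r j.+1)] /\
    (forall i j, 1 <= i <= k -> 1 <= j <= l ->
       M i j (std (cell tau (c i) (c i.+1) (r j) (r j.+1)))).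

Definition M13 (pi : seq nat) (i j : nat) : seq nat -> Prop :=
  match i, j with
  | 1, 1 => Av pi
  | 2, 1 => Dec
  | 1, 2 => Dec
  | 2, 2 => Inc
  | _, _ => fun _ => True
  end.

(* An occurrence of [sigma] in a gridded permutation inherits a gridding: the
   column divider splits the occurrence after some k of its entries, the row
   divider passes above its t smallest entries, and each cell of the occurrence
   is a subpattern of the corresponding cell of the permutation.  So it suffices
   to check that none of the 36 cuts (k, t) of [sigma] puts every cell in its
   class, which is a finite computation. *)
From mathcomp Require Import all_boot zify.

Set Implicit Arguments.
Unset Strict Implicit.
Unset Printing Implicit Defensive.

Lemma order_iso_sym a b : order_iso a b -> order_iso b a.
Proof. by case=> eq_ab iso_ab; split=> // i j; rewrite -eq_ab => *; rewrite iso_ab. Qed.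

Lemma order_iso_trans a b c : order_iso a b -> order_iso b c -> order_iso a c.
Proof.
case=> eq_ab iso_ab [eq_bc iso_bc]; split; first by rewrite eq_ab.
by move=> i j lt_i lt_j; rewrite iso_ab // iso_bc // -eq_ab.
Qed.

Lemma order_iso_map_nth a b (ix : seq nat) :
  order_iso a b -> {in ix, forall i, i < size a} ->
  order_iso [seq nth 0 a i | i <- ix] [seq nth 0 b i | i <- ix].
Proof.
case=> _ iso_ab ix_lt; split; first by rewrite !size_map.
move=> i j; rewrite size_map => lt_i lt_j.
by rewrite !(nth_map 0) // iso_ab ?ix_lt ?mem_nth.
Qed.

Lemma order_iso_index_map (F : seq nat -> seq nat) a b :
  (forall (g : nat -> nat) s, F (map g s) = map g (F s)) ->
  (forall s, {subset F s <= s}) ->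
  order_iso a b -> order_iso (F a) (F b).
Proof.
move=> Fmap Fsub iso_ab; have [eq_ab _] := iso_ab.
rewrite -(mkseq_nth 0 a) -(mkseq_nth 0 b) -eq_ab /mkseq !Fmap.
by apply: order_iso_map_nth => // i /Fsub; rewrite mem_iota.
Qed.

Lemma order_iso_mask m a b : order_iso a b -> order_iso (mask m a) (mask m b).
Proof. by apply: order_iso_index_map => [g s|s x /mem_mask]; rewrite ?map_mask. Qed.

Lemma order_iso_take k a b : order_iso a b -> order_iso (take k a) (take k b).
Proof. by apply: order_iso_index_map => [g s|s x /mem_take]; rewrite ?map_take. Qed.

Lemma order_iso_drop k a b : order_iso a b -> order_iso (drop k a) (drop k b).
Proof. by apply: order_iso_index_map => [g s|s x /mem_drop]; rewrite ?map_drop. Qed.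

Lemma ltn_count_sub (T : eqType) (a b : pred T) (s : seq T) x :
  subpred a b -> x \in s -> b x -> ~~ a x -> count a s < count b s.
Proof.
move=> sub_ab; elim: s => //= y s IHs; rewrite inE => /orP [/eqP <- | x_s] bx ax.
  by rewrite bx (negbTE ax) add0n add1n ltnS sub_count.
rewrite -addnS leq_add ?IHs //.
by case ay: (a y) => //; rewrite (sub_ab _ ay).
Qed.

Lemma count_nth (T : Type) (x0 : T) (a : pred T) s :
  count a s = count (fun j => a (nth x0 s j)) (iota 0 (size s)).
Proof. by rewrite -{1}(mkseq_nth x0 s) count_map. Qed.

Definition rank (s : seq nat) (x : nat) : nat := count (fun y => y < x) s.

Lemma ltn_rank s x y : x \in s -> (rank s x < rank s y) = (x < y).
Proof.
move=> x_s; case: (ltnP x y) => [lt_xy | le_yx].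
  rewrite /rank (ltn_count_sub _ x_s) /= ?ltnn //.
  by move=> u /ltn_trans; apply.
by apply/negbTE; rewrite -leqNgt sub_count // => u /= /leq_trans; apply.
Qed.

Lemma order_iso_std s : order_iso s (std s).
Proof.
split=> [|i j lt_i lt_j]; first by rewrite size_map.
by rewrite !(nth_map 0) // ltnS ltn_rank ?mem_nth.
Qed.

Lemma rank_order_iso w s i : order_iso w s -> i < size w ->
  rank w (nth 0 w i) = rank s (nth 0 s i).
Proof.
case=> eq_ws iso_ws lt_i.
rewrite /rank (count_nth 0 _ w) (count_nth 0 _ s) -eq_ws.
by apply: eq_in_count => j; rewrite mem_iota /= => lt_j; apply: iso_ws.
Qed.

Lemma map_ltn_order_iso w s R : order_iso w s ->
  [seq y < R | y <- w] = [seq rank s y < rank w R | y <- s].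
Proof.
move=> iso_ws; have [eq_ws _] := iso_ws.
apply: (eq_from_nth (x0 := false)); rewrite !size_map // => i lt_i.
rewrite !(nth_map 0) -?eq_ws //.
by rewrite -(@ltn_rank w) ?mem_nth // (rank_order_iso iso_ws).
Qed.

Lemma contains_subseq s t p : subseq s t -> contains s p -> contains t p.
Proof.
move=> sub_st [m [_ iso_p]].
have /subseqP [m' size_m' eq_mask] : subseq (mask m s) t.
  exact: subseq_trans (mask_subseq m s) sub_st.
by exists m'; rewrite -eq_mask.
Qed.

Lemma contains_order_iso s t p : order_iso s t -> contains s p -> contains t p.
Proof.
move=> iso_st [m [size_m iso_p]].
exists m; split; first by rewrite size_m; case: iso_st.
exact: order_iso_trans (order_iso_sym (order_iso_mask m iso_st)) iso_p.
Qed.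

Lemma Av_std p s : Av p (std s) -> Av p s.
Proof. by move=> avoid /(contains_order_iso (order_iso_std s)). Qed.

Lemma Av_filter_order_iso (P Q : pred nat) w s X p :
  order_iso w s -> subseq w X -> map P w = map Q s ->
  Av p (filter P X) -> Av p (filter Q s).
Proof.
move=> iso_ws sub_wX PQ avoid cont; apply: avoid.
apply: (@contains_subseq (filter P w)).
  by rewrite subseq_filter filter_all (subseq_trans (filter_subseq P w)).
apply: contains_order_iso cont.
rewrite !filter_mask PQ; exact/order_iso_sym/order_iso_mask.
Qed.

Fixpoint bitseqs (n : nat) : seq bitseq :=
  if n is n'.+1 then
    [seq true :: m | m <- bitseqs n'] ++ [seq false :: m | m <- bitseqs n']
  else [:: [::]].

Lemma mem_bitseqs n m : (m \in bitseqs n) = (size m == n).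
Proof.
have cons_inj (b : bool) : injective (cons b) by move=> ? ? [].
elim: n m => [|n IHn] [|b m] //=; rewrite mem_cat.
  by apply/negbTE/norP; split; apply/mapP => -[].
by case: b; rewrite (mem_map (cons_inj _)) IHn eqSS;
  case: mapP => [[? _ []] | _]; rewrite ?orbF.
Qed.

Definition order_isob (a b : seq nat) : bool :=
  (size a == size b) &&
  all (fun i => all (fun j => (nth 0 a i < nth 0 a j) == (nth 0 b i < nth 0 b j))
                    (iota 0 (size a)))
      (iota 0 (size a)).

Lemma order_isoP a b : reflect (order_iso a b) (order_isob a b).
Proof.
apply: (iffP andP) => [[/eqP eq_ab /allP iso_ab] | [eq_ab iso_ab]].
  split=> // i j lt_i lt_j.
  move: (iso_ab i); rewrite mem_iota => /(_ lt_i) /allP /(_ j).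
  by rewrite mem_iota => /(_ lt_j) /eqP.
split; first exact/eqP.
apply/allP => i; rewrite mem_iota => lt_i.
by apply/allP => j; rewrite mem_iota => lt_j; rewrite iso_ab.
Qed.

Definition containsb (s p : seq nat) : bool :=
  has (fun m => order_isob (mask m s) p) (bitseqs (size s)).

Lemma containsP s p : reflect (contains s p) (containsb s p).
Proof.
apply: (iffP hasP) => [[m] | [m [size_m /order_isoP iso_p]]].
  by rewrite mem_bitseqs => /eqP size_m /order_isoP; exists m.
by exists m; rewrite ?mem_bitseqs ?size_m.
Qed.

(* [A] and [D] are the two columns and [low] selects the bottom row; [p_ij] is
   the pattern avoided in column i, row j. *)
Definition gridded (p11 p21 p12 p22 : seq nat) (low : pred nat) (A D : seq nat) :
    Prop :=
  [/\ Av p11 [seq y <- A | low y], Av p21 [seq y <- D | low y],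
      Av p12 [seq y <- A | ~~ low y] & Av p22 [seq y <- D | ~~ low y]].

Definition griddedb (p11 p21 p12 p22 : seq nat) (low : pred nat) (A D : seq nat) :
    bool :=
  [&& ~~ containsb [seq y <- A | low y] p11,
      ~~ containsb [seq y <- D | low y] p21,
      ~~ containsb [seq y <- A | ~~ low y] p12 &
      ~~ containsb [seq y <- D | ~~ low y] p22].

Lemma griddedP p11 p21 p12 p22 low A D :
  reflect (gridded p11 p21 p12 p22 low A D) (griddedb p11 p21 p12 p22 low A D).
Proof.
by apply: (iffP and4P) => -[/containsP ? /containsP ? /containsP ? /containsP ?].
Qed.

Definition griddable (p11 p21 p12 p22 s : seq nat) : bool :=
  has (fun k => has (fun t =>
         griddedb p11 p21 p12 p22 (fun y => rank s y < t) (take k s) (drop k s))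
       (iota 0 (size s).+1))
    (iota 0 (size s).+1).

Lemma gridded_occurrence p11 p21 p12 p22 A D R s :
  gridded p11 p21 p12 p22 (fun y => y < R) A D -> contains (A ++ D) s ->
  griddable p11 p21 p12 p22 s.
Proof.
move=> [av11 av21 av12 av22] [m [size_m iso_ms]].
set wA := mask (take (size A) m) A; set wD := mask (drop (size A) m) D.
have split_w : mask m (A ++ D) = wA ++ wD.
  rewrite -{1}(cat_take_drop (size A) m) mask_cat // size_takel //.
  by rewrite size_m size_cat leq_addr.
rewrite split_w in iso_ms.
set k := size wA; set t := rank (wA ++ wD) R.
have [size_ws _] := iso_ms.
have low_ws := map_ltn_order_iso R iso_ms.
have lowA : map (fun y => y < R) wA = map (fun y => rank s y < t) (take k s).
  by rewrite map_take -low_ws -map_take take_size_cat.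
have lowD : map (fun y => y < R) wD = map (fun y => rank s y < t) (drop k s).
  by rewrite map_drop -low_ws -map_drop drop_size_cat.
have isoA : order_iso wA (take k s).
  by rewrite -(take_size_cat wD (erefl k)); apply: order_iso_take.
have isoD : order_iso wD (drop k s).
  by rewrite -(drop_size_cat wD (erefl k)); apply: order_iso_drop.
apply/hasP; exists k; first by rewrite mem_iota add0n -size_ws size_cat ltnS /k leq_addr.
apply/hasP; exists t; first by rewrite mem_iota add0n -size_ws ltnS /t /rank count_size.
have highA : map (fun y => ~~ (y < R)) wA = map (fun y => ~~ (rank s y < t)) (take k s).
  by rewrite (map_comp negb (fun y => y < R)) lowA -map_comp.
have highD : map (fun y => ~~ (y < R)) wD = map (fun y => ~~ (rank s y < t)) (drop k s).
  by rewrite (map_comp negb (fun y => y < R)) lowD -map_comp.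
apply/griddedP; split.
- exact: Av_filter_order_iso isoA (mask_subseq _ _) lowA av11.
- exact: Av_filter_order_iso isoD (mask_subseq _ _) lowD av21.
- exact: Av_filter_order_iso isoA (mask_subseq _ _) highA av12.
- exact: Av_filter_order_iso isoD (mask_subseq _ _) highD av22.
Qed.

Lemma cellE tau c0 c1 r0 r1 : 0 < c0 -> c1 <= (size tau).+1 ->
  cell tau c0 c1 r0 r1 = [seq y <- take (c1 - c0) (drop c0.-1 tau) | r0 <= y < r1].
Proof.
move=> c0_gt0 c1_le.
by rewrite /cell -{1}(prednK c0_gt0) -add1n iotaDl -map_comp (map_nth_iota 0) //; lia.
Qed.

Lemma Grid_M13_gridded pi tau : Grid 2 2 (M13 pi) tau ->
  exists C R, gridded pi [:: 1; 2] [:: 1; 2] [:: 2; 1] (fun y => y < R)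
                      (take C tau) (drop C tau).
Proof.
move=> [tau_perm [c [r [[c1 c3 c_mono] [[r1 r3 _] cells]]]]].
have tau_range y : y \in tau -> 0 < y <= size tau.
  by rewrite (perm_mem tau_perm) mem_iota add1n ltnS.
have c2_gt0 : 0 < c 2 by have := c_mono 1 isT; rewrite c1.
have c2_le : c 2 <= (size tau).+1 by have := c_mono 2 isT; rewrite c3.
have cell_left r0 r0' :
    cell tau (c 1) (c 2) r0 r0' = [seq y <- take (c 2).-1 tau | r0 <= y < r0'].
  by rewrite cellE ?c1 ?drop0 ?subn1.
have cell_right r0 r0' :
    cell tau (c 2) (c 3) r0 r0' = [seq y <- drop (c 2).-1 tau | r0 <= y < r0'].
  by rewrite cellE ?c3 ?take_oversize // size_drop; lia.
have row_low X : {subset X <= tau} ->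
    [seq y <- X | r 1 <= y < r 2] = [seq y <- X | y < r 2].
  move=> sub_X; apply: eq_in_filter => y /sub_X /tau_range.
  by rewrite r1 => /andP [-> _].
have row_high X : {subset X <= tau} ->
    [seq y <- X | r 2 <= y < r 3] = [seq y <- X | ~~ (y < r 2)].
  move=> sub_X; apply: eq_in_filter => y /sub_X /tau_range /andP [_ le_y].
  by rewrite r3 ltnS le_y andbT leqNgt.
exists (c 2).-1, (r 2); split; apply: Av_std.
- by move: (cells 1 1 isT isT); rewrite /= cell_left row_low // => y /mem_take.
- by move: (cells 2 1 isT isT); rewrite /= cell_right row_low // => y /mem_drop.
- by move: (cells 1 2 isT isT); rewrite /= cell_left row_high // => y /mem_take.
- by move: (cells 2 2 isT isT); rewrite /= cell_right row_high // => y /mem_drop.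
Qed.

Theorem proposition13 (pi sigma : seq nat) :
  [\/ pi = [:: 1; 3; 2] /\ sigma = [:: 1; 4; 5; 2; 3],
      pi = [:: 2; 3; 1] /\ sigma = [:: 2; 4; 5; 1; 3],
      pi = [:: 3; 2; 1] /\ sigma = [:: 3; 2; 1; 5; 4] |
      pi = [:: 3; 2; 1] /\ sigma = [:: 4; 2; 5; 1; 3]] ->
  forall tau : seq nat, Grid 2 2 (M13 pi) tau -> Av sigma tau.
Proof.
move=> cases tau /Grid_M13_gridded [C [R tau_gridded]].
rewrite /Av -(cat_take_drop C tau) => /(gridded_occurrence tau_gridded).
by apply/negP; case: cases => -[-> ->]; vm_compute.
Qed.
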